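(* Let $A(x)=\sum_{i=0}^d a_ix^i\in\mathbb{Z}[x]$ have degree $d\ge1$ with $a_0\neq0$, let $m>d$, and let $N=(N_{i,j})$ be the $d\times m$ rational matrix with $N_{i,j}=\delta_{ij}$ for $1\le i,j\le d$ and whose rows are linear recurrences determined by $A$ (i.e. $\sum_{k=0}^d a_kN_{i,j+k}=0$ for $1\le j\le m-d$). Let $p$ be a prime and let $w$ be the abscissa of a vertex of the $p$-adic Newton polygon of $A$. Then the $d\times d$ submatrix of $N$ formed by the columns $1,2,\dots,w,\ m-d+w+1,\dots,m$ is nonsingular. Equivalently, the $(m-d)\times(m-d)$ matrix $U=(a_{w+i-j})_{1\le i,j\le m-d}$ (with $a_k=0$ for $k<0$ or $k>d$) is nonsingular.
   Context: The $p$-adic Newton polygon of $A$ is the lower boundary of the convex hull of the points $(i,v_p(a_i))$, $0\le i\le d$, where $v_p$ is the $p$-adic valuation; its vertices have abscissae $0=w_0<w_1<\dots<w_r=d$. *)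

From HB Require Import structures.
From mathcomp Require Import all_boot all_order all_algebra.
Set Implicit Arguments. Unset Strict Implicit. Unset Printing Implicit Defensive.
Import Order.TTheory GRing.Theory Num.Theory.
Local Open Scope ring_scope.

Definition vp (p : nat) (a : int) : nat := logn p (absz a).

(* w is the abscissa of a vertex of the p-adic Newton polygon of A, i.e. of
   the lower boundary of the convex hull of the points (i, v_p(a_i)) with
   a_i <> 0: the point (w, v_p(a_w)) is one of the points and there is a
   (non-vertical) line through it such that all the other points lie
   strictly above it (vertex = exposed point of the lower hull). *)
Definition newton_vertex (p : nat) (A : {poly int}) (w : nat) : Prop :=
  A`_w != 0 /\
  exists s : rat, forall i : nat, i != w -> A`_i != 0 ->
    (vp p (A`_w))%:R + s * (i%:R - w%:R) < (vp p (A`_i))%:R.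

(* Entry (i, j) of a d x m matrix with a natural-number column index
   (0-based); 0 if j is out of range. *)
Definition mxat (d m : nat) (N : 'M[rat]_(d, m)) (i : 'I_d) (j : nat) : rat :=
  match @insub _ (fun k => k < m)%N 'I_m j with
  | Some j' => N i j'
  | None => 0
  end.

(* 0-based column selection: columns 0..w-1 and m-d+w..m-1, i.e. the
   1-based columns 1..w, m-d+w+1..m. *)
Definition selcol (d m w : nat) (k : nat) : nat :=
  if (k < w)%N then k else (k + (m - d))%N.

Definition Nsub (d m w : nat) (N : 'M[rat]_(d, m)) : 'M[rat]_d :=
  \matrix_(i < d, k < d) mxat N i (selcol d m w k).

(* U = (a_{w+i-j})_{i,j}, with a_k = 0 for k < 0 (k > d automatic). *)
Definition Umx (A : {poly int}) (n w : nat) : 'M[int]_n :=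
  \matrix_(i < n, j < n) (if (j <= w + i)%N then A`_(w + i - j) else 0).

From HB Require Import structures.
From mathcomp Require Import all_boot all_order all_algebra all_fingroup.
Import Order.TTheory GRing.Theory Num.Theory.
Set Implicit Arguments.
Unset Strict Implicit.
Unset Printing Implicit Defensive.
Local Open Scope ring_scope.

(* Proof outline.
   1. U = (a_{w+i-j}) is nonsingular.  Expand det U by the Leibniz formula.
      The identity permutation contributes a_w^n, of p-adic valuation n*v
      with v = v_p(a_w).  For any other permutation sigma, the displacements
      i - sigma(i) sum to zero, so by the supporting line of slope s at the
      vertex (w, v) the valuations of the factors a_{w+i-sigma(i)} add up to
      more than n*v: these terms are divisible by p^(n*v+1), whereas the
      diagonal term is not.
   2. If a row vector c kills the selected columns of N, the combination
      u(t) = sum_i c_i N_{i,t} is a sequence satisfying the recurrence of A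
      that vanishes outside the window [w, w+n), n = m - d.  Restricted to
      the window, the recurrence reads (u_w, ..., u_{w+n-1}) U = 0, so u = 0
      by step 1; since the first d columns of N form the identity, c = 0.
   Section UmxNonsingular carries out step 1 for a fixed supporting line;
   sum_supported, window_mul_Umx and recurrent_window_zero treat recurrent
   sequences supported on a window, and Section RowCombination together
   with selcol_cover connects them to the matrix N. *)

Lemma sum_displacement n (sigma : 'S_n) :
  \sum_(i < n) ((i%:R : rat) - (sigma i)%:R) = 0.
Proof.
by rewrite sumrB [X in X - _](reindex_inj (@perm_inj _ sigma)) subrr.
Qed.

Lemma expn_sum_vp_dvd (I : Type) (r : seq I) (P : pred I) (F : I -> int) p :
  (p ^ (\sum_(i <- r | P i) vp p (F i)) %| `|(\prod_(i <- r | P i) F i)%R|)%N.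
Proof.
rewrite expn_sum.
apply: (big_ind2 (fun (x : nat) (y : int) => (x %| `|y|)%N)) => //.
- by move=> x1 x2 y1 y2 h1 h2; rewrite abszM dvdn_mul.
- by move=> i _; apply: pfactor_dvdnn.
Qed.

Section UmxNonsingular.

Variables (A : {poly int}) (p w n : nat) (s : rat).
Hypothesis p_prime : prime p.
Hypothesis Aw_neq0 : A`_w != 0.
Hypothesis vertex : forall i : nat, i != w -> A`_i != 0 ->
  (vp p A`_w)%:R + s * (i%:R - w%:R) < (vp p A`_i)%:R.

Local Notation U := (Umx A n w).
Local Notation v := (vp p A`_w).

Lemma Umx_diag_prod : \prod_(i < n) U i i = A`_w ^+ n.
Proof.
rewrite -[n in RHS]card_ord -prodr_const; apply: eq_bigr => i _.
by rewrite mxE leq_addl addnK.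
Qed.

Lemma vp_Umx_entry (i j : 'I_n) : U i j != 0 ->
  v%:R + s * (i%:R - j%:R) <= (vp p (U i j))%:R ?= iff (j == i).
Proof.
rewrite mxE; case: leqP => [le_jwi Aij|]; last by rewrite eqxx.
have [-> | ne_ji] := eqVneq j i.
  by rewrite subrr mulr0 addr0 addnK; apply/leifP; rewrite eqxx.
apply/leifP.
have ne_w : (w + i - j)%N != w.
  apply: contra ne_ji => /eqP e; apply/eqP/val_inj/eqP.
  by rewrite -(eqn_add2l w) -(subnK le_jwi) e.
have := vertex ne_w Aij.
by rewrite natrB // natrD [_ - w%:R]addrC !addrA addNr add0r.
Qed.

Lemma Umx_offdiag_dvd (sigma : 'S_n) : sigma != 1%g ->
  (p ^ (n * v).+1 %| `|(\prod_(i < n) U i (sigma i))%R|)%N.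
Proof.
move=> sigma_neq1.
have [-> | prod_neq0] := eqVneq (\prod_i U i (sigma i)) 0.
  by rewrite dvdn0.
have entry_neq0 i : U i (sigma i) != 0.
  apply: contraNneq prod_neq0 => h.
  by apply/prodf_eq0; exists i => //; apply/eqP.
have [i0 moved] : exists i, sigma i != i.
  apply/existsP; apply: contraR sigma_neq1 => /existsPn fixed.
  by apply/eqP/permP => i; rewrite perm1; apply/eqP/negPn/fixed.
have lt_val : ((n * v)%:R : rat) < (\sum_(i < n) vp p (U i (sigma i)))%:R.
  have -> : ((n * v)%:R : rat) =
      \sum_(i < n) (v%:R + s * (i%:R - (sigma i)%:R)).
    by rewrite big_split /= -mulr_sumr sum_displacement mulr0 addr0
      sumr_const card_ord mulnC natrM mulr_natr.
  rewrite natr_sum (bigD1 i0) //= [X in _ < X](bigD1 i0) //=.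
  apply: ltr_leD; first by rewrite (lt_leif (vp_Umx_entry (entry_neq0 i0))).
  by apply: ler_sum => i _; exact: (vp_Umx_entry (entry_neq0 i)).1.
rewrite ltr_nat in lt_val.
exact: dvdn_trans (dvdn_exp2l p lt_val) (expn_sum_vp_dvd _ _ _ p).
Qed.

(* Modulo p^(n v + 1), det U reduces to the diagonal term a_w^n, which is
   not divisible by p^(n v + 1). *)
Lemma det_Umx_neq0 : \det U != 0.
Proof.
rewrite /determinant (bigD1 1%g) //= odd_perm1 expr0 mul1r.
under eq_bigr do rewrite perm1; rewrite Umx_diag_prod.
set rest := \sum_(_ | _) _.
have dvd_rest : (((p ^ (n * v).+1)%N)%:Z %| rest)%Z.
  apply: rpred_sum => sigma sigma_neq1; apply: dvdz_mull.
  by rewrite dvdzE; apply: Umx_offdiag_dvd.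
apply/negP => /eqP det0.
have : (((p ^ (n * v).+1)%N)%:Z %| A`_w ^+ n)%Z.
  by rewrite -(addrK rest (A`_w ^+ n)) det0 sub0r rpredN.
rewrite dvdzE abszX pfactor_dvdn //; last by rewrite expn_gt0 absz_gt0 Aw_neq0.
by rewrite lognX mulnC ltnn.
Qed.

End UmxNonsingular.

Lemma sum_supported (R : nmodType) (F : nat -> R) (a len T : nat) :
  (a + len <= T)%N -> (forall t, (t < a)%N || (a + len <= t)%N -> F t = 0) ->
  \sum_(l < len) F (a + l)%N = \sum_(0 <= t < T) F t.
Proof.
move=> le_T supp.
have out_zero b e :
    (forall t, (b <= t < e)%N -> F t = 0) -> \sum_(b <= t < e) F t = 0.
  by move=> h; rewrite big_nat_cond big1 // => t /andP[/h].
rewrite (big_cat_nat (n := a)) //=; last exact: leq_trans (leq_addr _ _) le_T.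
rewrite out_zero ?add0r => [|t /andP[_ lt_ta]]; last by rewrite supp ?lt_ta.
rewrite (big_cat_nat (n := a + len)) ?leq_addr //=.
rewrite [X in _ + X]out_zero ?addr0 => [|t /andP[le_t _]];
  last by rewrite supp ?le_t ?orbT.
rewrite (big_addn 0 (a + len) a) addKn big_mkord.
by apply: eq_bigr => l _; rewrite addnC.
Qed.

Lemma window_mul_Umx (A : {poly int}) (n w K : nat) (u : nat -> rat) :
  (size A <= K)%N -> (forall t, (t < w)%N || (w + n <= t)%N -> u t = 0) ->
  (\row_(l < n) u (w + l)%N) *m map_mx intr (Umx A n w) =
  \row_(j < n) \sum_(k < K) (A`_k)%:~R * u (j + k)%N.
Proof.
move=> le_AK u_supp; apply/rowP => j; rewrite !mxE.
pose f t := u t * (if (j <= t)%N then A`_(t - j) else 0)%:~R.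
pose T := (w + n + (j + K))%N.
transitivity (\sum_(0 <= t < T) f t).
  rewrite -(@sum_supported _ f w n T) ?leq_addr //; last first.
    by move=> t /u_supp u0; rewrite /f u0 mul0r.
  by apply: eq_bigr => l _; rewrite !mxE.
rewrite -(@sum_supported _ f j K T) ?leq_addl //; last first.
  move=> t /orP[lt_tj | le_jK]; first by rewrite /f leqNgt lt_tj mulr0.
  have le_jt : (j <= t)%N := leq_trans (leq_addr _ _) le_jK.
  rewrite /f le_jt nth_default ?mulr0 // leq_subRL //.
  by rewrite (leq_trans _ le_jK) ?leq_add2l.
by apply: eq_bigr => k _; rewrite /f leq_addr addKn mulrC.
Qed.

Lemma recurrent_window_zero (A : {poly int}) (n w K : nat) (u : nat -> rat) :
  \det (Umx A n w) != 0 -> (size A <= K)%N ->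
  (forall t, (t < w)%N || (w + n <= t)%N -> u t = 0) ->
  (forall j, (j < n)%N -> \sum_(k < K) (A`_k)%:~R * u (j + k)%N = 0) ->
  forall t, u t = 0.
Proof.
move=> detU le_AK u_supp u_rec t.
have [/andP[le_wt lt_t] | out] := boolP ((w <= t) && (t < w + n))%N; last first.
  by apply: u_supp; rewrite ltnNge [(w + n <= t)%N]leqNgt -negb_and.
have window0 : \row_(l < n) u (w + l)%N = 0.
  have unitU : (map_mx intr (Umx A n w) : 'M[rat]_n) \in unitmx.
    by rewrite unitmxE unitfE det_map_mx intr_eq0.
  rewrite -[LHS](mulmxK unitU) (window_mul_Umx le_AK u_supp).
  have -> : \row_(j < n) \sum_(k < K) (A`_k)%:~R * u (j + k)%N = 0.
    by apply/rowP => j; rewrite !mxE u_rec.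
  by rewrite mul0mx.
have lt_tw : (t - w < n)%N by rewrite ltn_subLR.
have := congr1 (fun r : 'rV[rat]_n => r 0 (Ordinal lt_tw)) window0.
by rewrite !mxE subnKC.
Qed.

Section RowCombination.

Variables (d m : nat) (N : 'M[rat]_(d, m)) (c : 'rV[rat]_d).

Definition rowcomb (t : nat) : rat := \sum_(i < d) c 0 i * mxat N i t.

Lemma rowcomb_out t : (m <= t)%N -> rowcomb t = 0.
Proof.
by move=> le_mt; apply: big1 => i _; rewrite /mxat insubN ?mulr0 // -leqNgt.
Qed.

Lemma rowcomb_Nsub w (k : 'I_d) :
  (c *m Nsub w N) 0 k = rowcomb (selcol d m w k).
Proof. by rewrite mxE; apply: eq_bigr => i _; rewrite mxE. Qed.

Lemma rowcomb_rec (a : nat -> rat) (K j : nat) :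
  (forall i : 'I_d, \sum_(k < K) a k * mxat N i (j + k) = 0) ->
  \sum_(k < K) a k * rowcomb (j + k) = 0.
Proof.
move=> rec; under eq_bigr do rewrite mulr_sumr.
rewrite exchange_big /= big1 // => i _.
transitivity (c 0 i * \sum_(k < K) a k * mxat N i (j + k)).
  by rewrite mulr_sumr; apply: eq_bigr => k _; rewrite mulrCA.
by rewrite rec mulr0.
Qed.

Lemma rowcomb_id (i : 'I_d) :
  (forall (i' : 'I_d) j, (j < d)%N -> mxat N i' j = (i' == j :> nat)%:R) ->
  rowcomb i = c 0 i.
Proof.
move=> N_id; rewrite /rowcomb (bigD1 i) //= N_id // eqxx mulr1 big1 ?addr0 //.
by move=> i' ne; rewrite N_id // (inj_eq val_inj) (negbTE ne) mulr0.
Qed.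

End RowCombination.

Lemma selcol_cover (d m w t : nat) : (w <= d)%N -> (d <= m)%N -> (t < m)%N ->
  (t < w)%N || (w + (m - d) <= t)%N -> exists k : 'I_d, selcol d m w k = t.
Proof.
move=> le_wd le_dm lt_tm /orP[lt_tw | le_t].
  by exists (Ordinal (leq_trans lt_tw le_wd)); rewrite /selcol /= lt_tw.
have le_nt : (m - d <= t)%N := leq_trans (leq_addl w _) le_t.
have lt_k : (t - (m - d) < d)%N by rewrite ltn_subLR // subnK.
exists (Ordinal lt_k); rewrite /selcol /= ltnNge leq_subRL // addnC le_t /=.
by rewrite subnK.
Qed.

Unset Implicit Arguments.

Theorem mainTheorem6 (A : {poly int}) (m : nat) (N : 'M[rat]_((size A).-1, m))
    (p w : nat) :
  (1 <= (size A).-1)%N ->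
  A`_0 != 0 ->
  ((size A).-1 < m)%N ->
  (forall (i : 'I_(size A).-1) (j : nat), (j < (size A).-1)%N ->
     mxat N i j = (i == j :> nat)%:R) ->
  (forall (i : 'I_(size A).-1) (j : nat), (j < m - (size A).-1)%N ->
     \sum_(k < (size A).-1.+1) (A`_k)%:~R * mxat N i (j + k) = 0) ->
  prime p ->
  newton_vertex p A w ->
  \det (Nsub w N) != 0 /\
  \det (Umx A (m - (size A).-1) w) != 0.
Proof.
move=> d_gt0 _ lt_dm N_id N_rec p_prime [Aw_neq0 [s vertex]].
have size_A : size A = (size A).-1.+1 by case: (size A) d_gt0.
set d := (size A).-1 in N N_id N_rec lt_dm size_A *.
set n := (m - d)%N in N_rec *.
have detU : \det (Umx A n w) != 0 := det_Umx_neq0 n p_prime Aw_neq0 vertex.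
split=> //.
have le_wd : (w <= d)%N.
  rewrite -ltnS -size_A ltnNge.
  by apply: contra Aw_neq0 => /(nth_default 0) ->.
apply/negP => /det0P [c c_neq0 cN0].
have u_supp t : (t < w)%N || (w + n <= t)%N -> rowcomb N c t = 0.
  move=> out; have [lt_tm | ] := ltnP t m; last exact: rowcomb_out.
  have [k <-] := selcol_cover le_wd (ltnW lt_dm) lt_tm out.
  by rewrite -rowcomb_Nsub cN0 mxE.
have u_rec j : (j < n)%N ->
    \sum_(k < d.+1) (A`_k)%:~R * rowcomb N c (j + k) = 0.
  move=> lt_jn; apply: (rowcomb_rec c (a := fun k => (A`_k)%:~R)) => i.
  exact: N_rec.
have u0 := recurrent_window_zero detU (eq_leq size_A) u_supp u_rec.
by case/eqP: c_neq0; apply/rowP => i; rewrite mxE -(rowcomb_id c i N_id) u0.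
Qed.
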